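(* Let $t>0$, $n\geq 3$, and let $\varphi_1,\dots,\varphi_n>0$ with $\varphi_1+\dots+\varphi_n=t$ (indices cyclic mod $n$). Let $\overline{\mathcal{P}}(\varphi_1,\dots,\varphi_n)\subset\mathbb{R}^n$ be the cone of support vectors and $\mathcal{P}(\varphi_1,\dots,\varphi_n)$ its intersection with the unit sphere of the Euclidean space $(\mathbb{R}^n,\operatorname{coarea})$. Then $\mathcal{P}(\varphi_1,\dots,\varphi_n)$ is a spherical simplex whose facets are contained in the hyperplanes $\{\ell_k=0\}$, $k=1,\dots,n$, where $\ell_k(h)=\frac{h_k\cosh\varphi_{k-1}-h_{k-1}}{\sinh\varphi_{k-1}}+\frac{h_k\cosh\varphi_k-h_{k+1}}{\sinh\varphi_k}$, and it is an acute spherical orthoscheme: the facets $\{\ell_k=0\}$ and $\{\ell_{k+1}=0\}$ meet at an acute interior dihedral angle $\alpha_k$ with $$\cos\alpha_k=\sqrt{\frac{\sinh\varphi_{k-1}\sinh\varphi_{k+1}}{\sinh(\varphi_{k-1}+\varphi_k)\sinh(\varphi_k+\varphi_{k+1})}},$$ and any two facets $\{\ell_k=0\}$, $\{\ell_j=0\}$ with $j\not\equiv k\pm1 \pmod n$ are orthogonal.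
   Context: Lorentz plane: $\mathbb{R}^2$ with $\langle x,y\rangle_1=x_1y_1-x_2y_2$; $\mathbb{H}=\{x:\langle x,x\rangle_1=-1,x_2>0\}$; $H_s=\begin{pmatrix}\cosh s&\sinh s\\ \sinh s&\cosh s\end{pmatrix}$. A $t$-convex polygon is the intersection over $k\in\mathbb{Z}$, $i=1,\dots,n$ of the half-planes $\{x:\langle x,H_t^k\eta_i\rangle_1\le -h_i\}$ for pairwise distinct $\eta_i\in\mathbb{H}$ and $h_i>0$, where each $\eta_i$ is the inward normal of a genuine edge; $(h_1,\dots,h_n)$ is its support vector. The cone of support vectors $\overline{\mathcal{P}}(\varphi_1,\dots,\varphi_n)$ is, for a fixed $\eta\in\mathbb{H}$, the set of support vectors of $t$-convex polygons whose fundamental edges have inward unit normals $\eta_1=\eta$, $\eta_{i+1}=H_{\varphi_i}\eta_i$ ($i=1,\dots,n$; note $\eta_{n+1}=H_t\eta_1$); up to linear isomorphism it does not depend on $\eta$, and $\ell_k(h)$ is the Lorentzian length of the $k$-th fundamental edge. The coarea form is $\operatorname{coarea}(h,k)=\frac12\sum_{i=1}^n\big(h_i\frac{k_i\cosh\varphi_{i-1}-k_{i-1}}{\sinh\varphi_{i-1}}+h_i\frac{k_i\cosh\varphi_i-k_{i+1}}{\sinh\varphi_i}\big)$ (indices mod $n$), a positive definite symmetric bilinear form on $\mathbb{R}^n$. An acute spherical orthoscheme is a spherical simplex each of whose facets makes an acute dihedral angle with exactly two other facets and is orthogonal to all remaining facets. *)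

(* concrete reals R. Vectors of R^n are functions nat -> R,
   only the entries 0..n-1 matter; index k here corresponds to index k+1 of
   the paper, and cyclic index arithmetic is done mod n. *)
From Stdlib Require Import Reals Lra ZArith.
Open Scope R_scope.

Fixpoint rsum (n : nat) (f : nat -> R) : R :=
  match n with O => 0 | S m => rsum m f + f m end.

Definition prv (n k : nat) : nat := ((k + n - 1) mod n)%nat.
Definition nxt (n k : nat) : nat := ((k + 1) mod n)%nat.

Definition mink (x y : R * R) : R := fst x * fst y - snd x * snd y.
Definition in_H (x : R * R) : Prop := mink x x = -1 /\ 0 < snd x.
Definition boost (s : R) (x : R * R) : R * R :=
  (cosh s * fst x + sinh s * snd x, sinh s * fst x + cosh s * snd x).

(* fundamental inward normals: eta_0 = eta, eta_{i+1} = H_{phi_i} eta_i,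
   i.e. eta_i = H_{phi_0 + ... + phi_{i-1}} eta *)
Definition fnormal (phi : nat -> R) (eta : R * R) (i : nat) : R * R :=
  boost (rsum i phi) eta.

(* the t-convex set: intersection over k in Z, i < n of the half-planes
   { x | <x, H_t^k eta_i>_1 <= - h_i }  (H_t^k = H_{k t}) *)
Definition tpolygon (n : nat) (t : R) (phi : nat -> R) (eta : R * R)
    (h : nat -> R) (x : R * R) : Prop :=
  forall (k : Z) (i : nat), (i < n)%nat ->
    mink x (boost (IZR k * t) (fnormal phi eta i)) <= - h i.

Definition genuine_edge (K : R * R -> Prop) (nu : R * R) (c : R) : Prop :=
  exists x y : R * R, x <> y /\ K x /\ K y /\ mink x nu = - c /\ mink y nu = - c.

Definition support_cone (n : nat) (t : R) (phi : nat -> R) (eta : R * R)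
    (h : nat -> R) : Prop :=
  (forall i j, (i < n)%nat -> (j < n)%nat -> i <> j ->
      fnormal phi eta i <> fnormal phi eta j) /\
  (forall i, (i < n)%nat -> 0 < h i) /\
  (forall i, (i < n)%nat ->
      genuine_edge (tpolygon n t phi eta h) (fnormal phi eta i) (h i)).

Definition ell (n : nat) (phi : nat -> R) (k : nat) (h : nat -> R) : R :=
  (h k * cosh (phi (prv n k)) - h (prv n k)) / sinh (phi (prv n k)) +
  (h k * cosh (phi k) - h (nxt n k)) / sinh (phi k).

Definition coarea (n : nat) (phi : nat -> R) (h k : nat -> R) : R :=
  / 2 * rsum n (fun i =>
    h i * ((k i * cosh (phi (prv n i)) - k (prv n i)) / sinh (phi (prv n i))) +
    h i * ((k i * cosh (phi i) - k (nxt n i)) / sinh (phi i))).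

Definition sphere_part (n : nat) (t : R) (phi : nat -> R) (eta : R * R)
    (h : nat -> R) : Prop :=
  support_cone n t phi eta h /\ coarea n phi h h = 1.

Definition lin_indep_forms (n : nat) (f : nat -> (nat -> R) -> R) : Prop :=
  forall c : nat -> R,
    (forall h : nat -> R, rsum n (fun k => c k * f k h) = 0) ->
    forall k, (k < n)%nat -> c k = 0.

(* S is the (open) spherical simplex of the unit B-sphere cut out by the n
   linearly independent forms f_0..f_{n-1}: its facets lie in {f_k = 0},
   eps_k = +-1 selects the side of each hyperplane on which S lies. *)
Definition spherical_simplex_facets (n : nat)
    (B : (nat -> R) -> (nat -> R) -> R) (S : (nat -> R) -> Prop)
    (f : nat -> (nat -> R) -> R) (eps : nat -> R) : Prop :=
  lin_indep_forms n f /\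
  (forall k, (k < n)%nat -> eps k = 1 \/ eps k = -1) /\
  (forall h : nat -> R, S h <-> (B h h = 1 /\ forall k, (k < n)%nat -> 0 < eps k * f k h)).

Definition inward_normal (B : (nat -> R) -> (nat -> R) -> R)
    (f : (nat -> R) -> R) (eps : R) (N : nat -> R) : Prop :=
  forall x : nat -> R, B N x = eps * f x.

Definition dihedral_cos (B : (nat -> R) -> (nat -> R) -> R) (Nk Nj : nat -> R) : R :=
  - B Nk Nj / sqrt (B Nk Nk * B Nj Nj).

From Stdlib Require Import Reals Lra Lia ZArith.
Open Scope R_scope.

(* Write [eta = nu u] with [nu a = (sinh a, cosh a)]; the normals [H_t^k eta_i] are then
   [nu theta_J] for an increasing sequence [theta_J], J in Z, with steps [phi_(J mod n)].
   For any point x the slacks [c_J = - <x, nu theta_J>_1 - h_(J mod n)] satisfy a discrete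
   hyperbolic convexity relation whose defect is [ell_(J mod n)(h)].  So if all [ell_k(h)]
   are positive, a point on two consecutive support lines has all slacks nonnegative and lies
   in the polygon; the k-th support line then meets the polygon in a segment of Lorentzian
   length [ell_k(h)], while conversely a genuine edge forces [ell_k(h) > 0].  Hence the support
   cone is [{ell_k > 0 for all k}] (a minimum principle for [ell] gives [h > 0]).
   Since [coarea h x = 1/2 sum_k h_k ell_k(x)], the vector [2 e_k] is the coarea-normal of
   the facet [{ell_k = 0}]; the Gram matrix of these normals is cyclically tridiagonal, which
   gives the orthogonality of non-adjacent facets and the angles, and the minimum principle
   again gives the linear independence of the [ell_k]. *)

Lemma sinh_add a b : sinh (a + b) = sinh a * cosh b + cosh a * sinh b.
Proof.
  unfold sinh, cosh; rewrite Ropp_plus_distr, !exp_plus, !exp_Ropp.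
  pose proof (exp_pos a); pose proof (exp_pos b); field; lra.
Qed.

Lemma cosh_add a b : cosh (a + b) = cosh a * cosh b + sinh a * sinh b.
Proof.
  unfold sinh, cosh; rewrite Ropp_plus_distr, !exp_plus, !exp_Ropp.
  pose proof (exp_pos a); pose proof (exp_pos b); field; lra.
Qed.

Lemma cosh_sinh_sq a : cosh a * cosh a - sinh a * sinh a = 1.
Proof. unfold sinh, cosh; rewrite !exp_Ropp; pose proof (exp_pos a); field; lra. Qed.

Lemma sinh_opp a : sinh (- a) = - sinh a.
Proof. unfold sinh; rewrite Ropp_involutive; field. Qed.

Lemma cosh_opp a : cosh (- a) = cosh a.
Proof. unfold cosh; rewrite Ropp_involutive; field. Qed.

Lemma sinh_pos a : 0 < a -> 0 < sinh a.
Proof. intros Ha; rewrite <- sinh_0; now apply sinh_lt. Qed.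

Lemma cosh_pos a : 0 < cosh a.
Proof. unfold cosh; pose proof (exp_pos a); pose proof (exp_pos (- a)); lra. Qed.

Lemma cosh_gt_1 a : 0 < a -> 1 < cosh a.
Proof.
  intros Ha; pose proof (sinh_pos a Ha); pose proof (cosh_pos a);
  pose proof (cosh_sinh_sq a); nra.
Qed.

Lemma sinh_inj a b : sinh a = sinh b -> a = b.
Proof.
  intros E; destruct (Rtotal_order a b) as [L|[L|L]]; auto;
  apply sinh_lt in L; lra.
Qed.

Lemma coth_add a b : sinh a <> 0 -> sinh b <> 0 ->
  cosh a / sinh a + cosh b / sinh b = sinh (a + b) / (sinh a * sinh b).
Proof. intros; rewrite sinh_add; field; auto. Qed.

Lemma div_sqrt_div_sq a r : 0 < a -> 0 < r -> a / sqrt (a * a / r) = sqrt r.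
Proof.
  intros Ha Hr; rewrite sqrt_div_alt, sqrt_square by nra.
  pose proof (sqrt_lt_R0 r Hr); field; lra.
Qed.

Lemma exists_acute_angle v : 0 < v < 1 -> exists alpha, 0 < alpha < PI / 2 /\ cos alpha = v.
Proof.
  intros Hv; exists (acos v); rewrite cos_acos by lra; split; [|auto].
  destruct (acos_bound_lt v ltac:(lra)) as [H0 H1]; split; auto.
  destruct (Rlt_le_dec (acos v) (PI / 2)) as [|L]; auto.
  pose proof (cos_le_0 (acos v) L ltac:(lra)); rewrite cos_acos in *; lra.
Qed.

Lemma le_div_of_mul_le a b c : 0 < c -> a * c <= b -> a <= b / c.
Proof.
  intros Hc H; apply (Rmult_le_reg_r c); auto.
  replace (b / c * c) with b by (field; lra); auto.
Qed.

Lemma div_le_of_le_mul a b c : 0 < c -> a <= b * c -> a / c <= b.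
Proof.
  intros Hc H; apply (Rmult_le_reg_r c); auto.
  replace (a / c * c) with a by (field; lra); auto.
Qed.

Lemma sqrt_in_unit r : 0 < r < 1 -> 0 < sqrt r < 1.
Proof.
  intros Hr; split; [now apply sqrt_lt_R0|].
  rewrite <- sqrt_1; apply sqrt_lt_1_alt; lra.
Qed.

Lemma sinh_ratio_in_unit a b c : 0 < a -> 0 < b -> 0 < c ->
  0 < sinh a * sinh c / (sinh (a + b) * sinh (b + c)) < 1.
Proof.
  intros Ha Hb Hc.
  pose proof (sinh_pos a Ha); pose proof (sinh_pos b Hb); pose proof (sinh_pos c Hc).
  assert (sinh a < sinh (a + b)) by (apply sinh_lt; lra).
  assert (sinh c < sinh (b + c)) by (apply sinh_lt; lra).
  split; [apply Rdiv_lt_0_compat; nra|].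
  apply (Rmult_lt_reg_r (sinh (a + b) * sinh (b + c))); [nra|].
  unfold Rdiv; rewrite Rmult_assoc, Rinv_l by nra; nra.
Qed.

Lemma rsum_ext n f g : (forall i, (i < n)%nat -> f i = g i) -> rsum n f = rsum n g.
Proof. induction n; intros E; simpl; auto; rewrite IHn, E; auto. Qed.

Lemma rsum_eq0 n f : (forall i, (i < n)%nat -> f i = 0) -> rsum n f = 0.
Proof. induction n; intros E; simpl; auto; rewrite IHn, E; auto; lra. Qed.

Lemma rsum_extract n f k : (k < n)%nat ->
  rsum n f = rsum n (fun i => if Nat.eqb i k then 0 else f i) + f k.
Proof.
  induction n as [|n IH]; intros Hk; [lia|simpl].
  destruct (Nat.eqb_spec n k) as [->|Hnk].
  - rewrite (rsum_ext k (fun i => if Nat.eqb i k then 0 else f i) f); [lra|intros i Hi].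
    destruct (Nat.eqb_spec i k); [lia|auto].
  - rewrite IH by lia; lra.
Qed.

Lemma rsum_single n f k : (k < n)%nat ->
  (forall i, (i < n)%nat -> i <> k -> f i = 0) -> rsum n f = f k.
Proof.
  intros Hk Hf; rewrite (rsum_extract n f k Hk), rsum_eq0; [lra|].
  intros i Hi; destruct (Nat.eqb_spec i k); auto.
Qed.

Lemma rsum_three n f a b c : (a < n)%nat -> (b < n)%nat -> (c < n)%nat ->
  a <> b -> a <> c -> b <> c ->
  (forall i, (i < n)%nat -> i <> a -> i <> b -> i <> c -> f i = 0) ->
  rsum n f = f a + f b + f c.
Proof.
  intros Ha Hb Hc Hab Hac Hbc Hf.
  rewrite (rsum_extract n f a), (rsum_extract n _ b), (rsum_single n _ c) by
    (auto; intros i Hi Hic; destruct (Nat.eqb_spec i b), (Nat.eqb_spec i a); auto).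
  destruct (Nat.eqb_spec b a), (Nat.eqb_spec c b), (Nat.eqb_spec c a); try lia; lra.
Qed.

Lemma rsum_lt n f i j : (forall k, (k < n)%nat -> 0 < f k) -> (i < j <= n)%nat ->
  rsum i f < rsum j f.
Proof.
  intros Hf Hij; induction j as [|j IH]; [lia|simpl].
  pose proof (Hf j ltac:(lia)).
  destruct (Nat.eq_dec i j) as [->|]; [lra|]; pose proof (IH ltac:(lia)); lra.
Qed.

Lemma exists_argmin (f : nat -> R) n : (0 < n)%nat ->
  exists m, (m < n)%nat /\ forall k, (k < n)%nat -> f m <= f k.
Proof.
  induction n as [|n IH]; intros Hn; [lia|].
  destruct (Nat.eq_dec n 0) as [->|Hn0].
  { exists 0%nat; split; [lia|intros k Hk; replace k with 0%nat by lia; lra]. }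
  destruct (IH ltac:(lia)) as [m [Hm Hmin]].
  destruct (Rle_dec (f m) (f n)).
  - exists m; split; [lia|intros k Hk].
    destruct (Nat.eq_dec k n) as [->|]; auto; apply Hmin; lia.
  - exists n; split; [lia|intros k Hk].
    destruct (Nat.eq_dec k n) as [->|]; [lra|pose proof (Hmin k ltac:(lia)); lra].
Qed.

Lemma nxt_spec n j : (j < n)%nat -> nxt n j = if Nat.eqb (j + 1) n then 0%nat else (j + 1)%nat.
Proof.
  intros Hj; unfold nxt; destruct (Nat.eqb_spec (j + 1) n) as [->|].
  - apply Nat.Div0.mod_same.
  - apply Nat.mod_small; lia.
Qed.

Lemma prv_spec n j : (j < n)%nat -> prv n j = if Nat.eqb j 0 then (n - 1)%nat else (j - 1)%nat.
Proof.
  intros Hj; unfold prv; destruct (Nat.eqb_spec j 0) as [->|].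
  - apply Nat.mod_small; lia.
  - replace (j + n - 1)%nat with ((j - 1) + 1 * n)%nat by lia.
    rewrite Nat.Div0.mod_add; apply Nat.mod_small; lia.
Qed.

Ltac cyclic_indices n := repeat match goal with
  | |- context [nxt n ?j] => rewrite (nxt_spec n j) by lia
  | |- context [prv n ?j] => rewrite (prv_spec n j) by lia
  | |- context [Nat.eqb ?a ?b] => destruct (Nat.eqb_spec a b)
  end; lia.

Section CyclicIndices.
Variables n j : nat.
Hypothesis j_lt : (j < n)%nat.

Lemma nxt_lt : (nxt n j < n)%nat.
Proof. cyclic_indices n. Qed.

Lemma prv_lt : (prv n j < n)%nat.
Proof. cyclic_indices n. Qed.

Lemma prv_nxt : prv n (nxt n j) = j.
Proof. rewrite (nxt_spec n j) by lia; cyclic_indices n. Qed.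

Lemma nxt_prv : nxt n (prv n j) = j.
Proof. rewrite (prv_spec n j) by lia; cyclic_indices n. Qed.

Hypothesis n_ge_3 : (3 <= n)%nat.

Lemma nxt_neq : nxt n j <> j.
Proof. cyclic_indices n. Qed.

Lemma prv_neq : prv n j <> j.
Proof. cyclic_indices n. Qed.

Lemma nxt_neq_prv : nxt n j <> prv n j.
Proof. cyclic_indices n. Qed.
End CyclicIndices.

(* The discrete analogue of [c'' - c = L]: [c] is convex with respect to the
   hyperbolic functions on the mesh with steps [P], with defect [L]. *)
Definition sinh_convex (P L c : Z -> R) : Prop :=
  forall J, sinh (P J) * c (J - 1)%Z + sinh (P (J - 1)%Z) * c (J + 1)%Z
            - sinh (P (J - 1)%Z + P J) * c J = L J * sinh (P (J - 1)%Z) * sinh (P J).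

Section SinhConvex.
Variables P L c : Z -> R.
Hypothesis P_pos : forall J, 0 < P J.
Hypothesis L_pos : forall J, 0 < L J.
Hypothesis c_convex : sinh_convex P L c.

Let slope J := (c (J + 1)%Z - c J * cosh (P J)) / sinh (P J).

(* The pair (c, slope) is moved by a hyperbolic rotation plus the forcing (0, L). *)
Lemma sinh_convex_step J :
  c (J + 1)%Z = c J * cosh (P J) + slope J * sinh (P J) /\
  slope (J + 1)%Z = L (J + 1)%Z + c J * sinh (P J) + slope J * cosh (P J).
Proof.
  pose proof (sinh_pos _ (P_pos J)); pose proof (sinh_pos _ (P_pos (J + 1)%Z)).
  pose proof (cosh_sinh_sq (P J)) as Id.
  pose proof (c_convex (J + 1)%Z) as Rec; rewrite Z.add_simpl_r, sinh_add in Rec.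
  unfold slope; split; [field; lra|].
  apply (Rmult_eq_reg_l (sinh (P J) * sinh (P (J + 1)%Z))); [|nra].
  field_simplify; [|lra|lra].
  replace (cosh (P J) ^ 2) with (1 + sinh (P J) ^ 2) by (rewrite <- Id; ring).
  lra.
Qed.

Lemma sinh_convex_nonneg_after a : c a = 0 -> c (a + 1)%Z = 0 ->
  forall J, (a <= J)%Z -> 0 <= c J.
Proof.
  intros Ha Ha1.
  assert (Inv : forall m : nat, 0 <= c (a + Z.of_nat m)%Z /\ 0 <= slope (a + Z.of_nat m)%Z).
  { induction m as [|m [Hc Hs]].
    - rewrite Z.add_0_r; unfold slope; rewrite Ha, Ha1; split; [lra|].
      right; field; apply Rgt_not_eq, sinh_pos, P_pos.
    - replace (a + Z.of_nat (S m))%Z with (a + Z.of_nat m + 1)%Z by lia.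
      set (K := (a + Z.of_nat m)%Z) in *.
      destruct (sinh_convex_step K) as [-> ->].
      pose proof (sinh_pos _ (P_pos K)); pose proof (cosh_pos (P K)); pose proof (L_pos (K + 1)%Z).
      split; nra. }
  intros J HJ; replace J with (a + Z.of_nat (Z.to_nat (J - a)))%Z by lia; apply Inv.
Qed.
End SinhConvex.

Lemma sinh_convex_reflect P L c b : sinh_convex P L c ->
  sinh_convex (fun J => P (b - J - 1)%Z) (fun J => L (b - J)%Z) (fun J => c (b - J)%Z).
Proof.
  intros Hc J; pose proof (Hc (b - J)%Z) as E.
  replace (b - (J - 1) - 1)%Z with (b - J)%Z by lia.
  replace (b - (J - 1))%Z with (b - J + 1)%Z by lia.
  replace (b - (J + 1))%Z with (b - J - 1)%Z by lia.
  rewrite (Rplus_comm (P (b - J)%Z)); lra.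
Qed.

Lemma sinh_convex_nonneg P L c a :
  (forall J, 0 < P J) -> (forall J, 0 < L J) -> sinh_convex P L c ->
  c a = 0 -> c (a + 1)%Z = 0 -> forall J, 0 <= c J.
Proof.
  intros HP HL Hc Ha Ha1 J.
  destruct (Z_le_gt_dec a J) as [HJ|HJ].
  { exact (sinh_convex_nonneg_after P L c HP HL Hc a Ha Ha1 J HJ). }
  (* reflecting about a + 1/2 swaps the two vanishing values *)
  set (b := (2 * a + 1)%Z).
  assert (Hr := sinh_convex_reflect P L c b Hc).
  replace J with (b - (b - J))%Z by lia.
  apply (sinh_convex_nonneg_after _ _ _ (fun K => HP _) (fun K => HL _) Hr a);
    unfold b; [replace (2 * a + 1 - a)%Z with (a + 1)%Z by lia
              |replace (2 * a + 1 - (a + 1))%Z with a by lia|]; auto; lia.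
Qed.

(* [nu a] parametrises the hyperbola [in_H] by Lorentzian arclength. *)
Definition nu (a : R) : R * R := (sinh a, cosh a).

(* The coordinate of [x] along the unit tangent [(cosh a, sinh a)] of [in_H] at [nu a]. *)
Definition tang (x : R * R) (a : R) : R := fst x * cosh a - snd x * sinh a.

Definition frame (a m s : R) : R * R :=
  (s * cosh a - m * sinh a, s * sinh a - m * cosh a).

Lemma boost_nu s a : boost s (nu a) = nu (s + a).
Proof. unfold boost, nu; simpl; rewrite sinh_add, cosh_add; f_equal; ring. Qed.

Lemma in_H_nu eta : in_H eta -> exists u, eta = nu u.
Proof.
  destruct eta as [a b]; unfold in_H, mink, nu; simpl; intros [H1 H2].
  assert (Hp : 0 < a + b) by nra.
  exists (ln (a + b)); unfold sinh, cosh; rewrite exp_Ropp, exp_ln by auto.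
  replace (/ (a + b)) with (b - a) by (field_simplify_eq; nra).
  f_equal; field.
Qed.

Lemma nu_inj a b : nu a = nu b -> a = b.
Proof. unfold nu; intros E; injection E as E _; now apply sinh_inj. Qed.

Lemma mink_frame a m s : mink (frame a m s) (nu a) = m.
Proof.
  unfold mink, frame, nu; simpl.
  transitivity (m * (cosh a * cosh a - sinh a * sinh a)); [ring|rewrite cosh_sinh_sq; ring].
Qed.

Lemma tang_frame a m s : tang (frame a m s) a = s.
Proof.
  unfold tang, frame; simpl.
  transitivity (s * (cosh a * cosh a - sinh a * sinh a)); [ring|rewrite cosh_sinh_sq; ring].
Qed.

Lemma frame_mink_tang x a : frame a (mink x (nu a)) (tang x a) = x.
Proof.
  destruct x as [x1 x2]; unfold frame, mink, tang, nu; simpl; f_equal;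
    [transitivity (x1 * (cosh a * cosh a - sinh a * sinh a))
    |transitivity (x2 * (cosh a * cosh a - sinh a * sinh a))];
    try ring; rewrite cosh_sinh_sq; ring.
Qed.

Lemma mink_nu_add x a d : mink x (nu (a + d)) = cosh d * mink x (nu a) + sinh d * tang x a.
Proof. unfold mink, nu, tang; simpl; rewrite sinh_add, cosh_add; ring. Qed.

Lemma mink_nu_sub x a d : mink x (nu (a - d)) = cosh d * mink x (nu a) - sinh d * tang x a.
Proof. unfold Rminus at 1; rewrite mink_nu_add, cosh_opp, sinh_opp; ring. Qed.

Lemma mink_nu_three x a A B :
  sinh B * mink x (nu (a - A)) + sinh A * mink x (nu (a + B)) = sinh (A + B) * mink x (nu a).
Proof. rewrite mink_nu_add, mink_nu_sub, sinh_add; ring. Qed.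

Lemma fnormal_nu phi u i : fnormal phi (nu u) i = nu (rsum i phi + u).
Proof. apply boost_nu. Qed.

Lemma ell_opp n phi k h : ell n phi k (fun i => - h i) = - ell n phi k h.
Proof. unfold ell, Rdiv; ring. Qed.

Section Lengths.
Variables (n : nat) (phi : nat -> R).
Hypothesis n_ge_3 : (3 <= n)%nat.
Hypothesis phi_pos : forall i, (i < n)%nat -> 0 < phi i.

Lemma ell_le_at_local_min h m : (m < n)%nat ->
  h m <= h (prv n m) -> h m <= h (nxt n m) ->
  exists K, 0 < K /\ ell n phi m h <= K * h m.
Proof.
  intros Hm Hp Hx; set (A := phi (prv n m)); set (B := phi m).
  assert (HA : 0 < A) by (apply phi_pos, prv_lt; auto).
  assert (HB : 0 < B) by (apply phi_pos; auto).
  pose proof (sinh_pos A HA) as sA; pose proof (sinh_pos B HB) as sB.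
  pose proof (cosh_gt_1 A HA); pose proof (cosh_gt_1 B HB).
  exists ((cosh A - 1) / sinh A + (cosh B - 1) / sinh B); split.
  { apply Rplus_lt_0_compat; apply Rdiv_lt_0_compat; lra. }
  unfold ell; fold A B; unfold Rdiv.
  pose proof (Rinv_0_lt_compat _ sA); pose proof (Rinv_0_lt_compat _ sB); nra.
Qed.

Lemma pos_of_ell_pos h : (forall k, (k < n)%nat -> 0 < ell n phi k h) ->
  forall i, (i < n)%nat -> 0 < h i.
Proof.
  intros Hl i Hi; destruct (exists_argmin h n ltac:(lia)) as [m [Hm Hmin]].
  destruct (ell_le_at_local_min h m Hm (Hmin _ (prv_lt n m Hm)) (Hmin _ (nxt_lt n m Hm)))
    as [K [HK Hle]].
  pose proof (Hl m Hm); pose proof (Hmin i Hi); nra.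
Qed.

Lemma nonneg_of_ell_eq0 h : (forall k, (k < n)%nat -> ell n phi k h = 0) ->
  forall i, (i < n)%nat -> 0 <= h i.
Proof.
  intros Hl i Hi; destruct (exists_argmin h n ltac:(lia)) as [m [Hm Hmin]].
  destruct (ell_le_at_local_min h m Hm (Hmin _ (prv_lt n m Hm)) (Hmin _ (nxt_lt n m Hm)))
    as [K [HK Hle]].
  pose proof (Hl m Hm); pose proof (Hmin i Hi); nra.
Qed.

Lemma eq0_of_ell_eq0 h : (forall k, (k < n)%nat -> ell n phi k h = 0) ->
  forall i, (i < n)%nat -> h i = 0.
Proof.
  intros Hl i Hi; pose proof (nonneg_of_ell_eq0 h Hl i Hi).
  assert (Hl' : forall k, (k < n)%nat -> ell n phi k (fun j => - h j) = 0)
    by (intros k Hk; rewrite ell_opp, Hl; auto; lra).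
  pose proof (nonneg_of_ell_eq0 _ Hl' i Hi); simpl in *; lra.
Qed.
End Lengths.

Definition zres (n : nat) (J : Z) : nat := Z.to_nat (J mod Z.of_nat n).

(* With [eta = nu u], the normal [H_t^k eta_i] is [nu (theta n t phi u (n k + i))]. *)
Definition theta (n : nat) (t : R) (phi : nat -> R) (u : R) (J : Z) : R :=
  IZR (J / Z.of_nat n) * t + rsum (zres n J) phi + u.

Definition edge_start (n : nat) (phi h : nat -> R) (j : nat) : R :=
  (h (prv n j) - h j * cosh (phi (prv n j))) / sinh (phi (prv n j)).

Definition edge_end (n : nat) (phi h : nat -> R) (j : nat) : R :=
  (h j * cosh (phi j) - h (nxt n j)) / sinh (phi j).

Lemma ell_edge_length n phi h j : ell n phi j h = edge_end n phi h j - edge_start n phi h j.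
Proof. unfold ell, edge_end, edge_start, Rdiv; ring. Qed.

Section Polygon.
Variables (n : nat) (t : R) (phi : nat -> R) (u : R).
Hypothesis n_ge_3 : (3 <= n)%nat.
Hypothesis phi_pos : forall i, (i < n)%nat -> 0 < phi i.
Hypothesis phi_sum : rsum n phi = t.

Local Notation th := (theta n t phi u).

Lemma zres_spec J :
  J = (Z.of_nat n * (J / Z.of_nat n) + Z.of_nat (zres n J))%Z /\ (zres n J < n)%nat.
Proof.
  unfold zres; pose proof (Z.mod_pos_bound J (Z.of_nat n) ltac:(lia)).
  rewrite Z2Nat.id by lia; split; [apply Z.div_mod; lia|lia].
Qed.

Lemma zres_lt J : (zres n J < n)%nat.
Proof. apply zres_spec. Qed.

Lemma zres_block k i : (i < n)%nat ->
  ((Z.of_nat n * k + Z.of_nat i) / Z.of_nat n)%Z = k /\ zres n (Z.of_nat n * k + Z.of_nat i)%Z = i.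
Proof.
  intros Hi; unfold zres; split.
  - symmetry; apply (Z.div_unique _ _ _ (Z.of_nat i)); lia.
  - rewrite <- (Z.mod_unique _ (Z.of_nat n) k (Z.of_nat i)); lia.
Qed.

Lemma theta_block k i : (i < n)%nat ->
  th (Z.of_nat n * k + Z.of_nat i)%Z = IZR k * t + (rsum i phi + u).
Proof. intros Hi; unfold theta; destruct (zres_block k i Hi) as [-> ->]; ring. Qed.

Lemma zres_theta_of_nat i : (i < n)%nat ->
  zres n (Z.of_nat i) = i /\ th (Z.of_nat i) = rsum i phi + u.
Proof.
  intros Hi; pose proof (theta_block 0 i Hi); pose proof (proj2 (zres_block 0 i Hi)).
  rewrite Z.mul_0_r, Z.add_0_l, Rmult_0_l, Rplus_0_l in *; auto.
Qed.

Lemma zres_theta_succ J :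
  zres n (J + 1)%Z = nxt n (zres n J) /\ th (J + 1)%Z = th J + phi (zres n J).
Proof.
  destruct (zres_spec J) as [EJ Hr]; set (q := (J / Z.of_nat n)%Z) in *; set (r := zres n J) in *.
  rewrite nxt_spec by auto; destruct (Nat.eqb_spec (r + 1) n) as [Hr1|Hr1].
  - replace (J + 1)%Z with (Z.of_nat n * (q + 1) + Z.of_nat 0)%Z by lia.
    rewrite theta_block by lia; split; [apply zres_block; lia|].
    unfold theta; fold q r; rewrite plus_IZR, <- phi_sum, <- Hr1.
    replace (r + 1)%nat with (S r) by lia; simpl; ring.
  - replace (J + 1)%Z with (Z.of_nat n * q + Z.of_nat (r + 1))%Z by lia.
    rewrite theta_block by lia; split; [apply zres_block; lia|].
    unfold theta; fold q r; replace (r + 1)%nat with (S r) by lia; simpl; ring.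
Qed.

Lemma zres_theta_pred J :
  zres n (J - 1)%Z = prv n (zres n J) /\ th (J - 1)%Z = th J - phi (prv n (zres n J)).
Proof.
  destruct (zres_theta_succ (J - 1)) as [E1 E2]; rewrite Z.sub_add in E1, E2.
  rewrite E1, prv_nxt by apply zres_lt; split; [auto|lra].
Qed.

Lemma tpolygon_iff h x : tpolygon n t phi (nu u) h x <->
  forall J, mink x (nu (th J)) <= - h (zres n J).
Proof.
  unfold tpolygon, fnormal; split.
  - intros Hx J; destruct (zres_spec J) as [EJ Hr].
    specialize (Hx (J / Z.of_nat n)%Z (zres n J) Hr); rewrite !boost_nu in Hx.
    unfold theta; rewrite <- Rplus_assoc in Hx; auto.
  - intros Hx k i Hi; specialize (Hx (Z.of_nat n * k + Z.of_nat i)%Z).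
    rewrite theta_block, (proj2 (zres_block k i Hi)) in Hx by auto; rewrite !boost_nu; auto.
Qed.

Lemma slack_sinh_convex h x :
  sinh_convex (fun J => phi (zres n J)) (fun J => ell n phi (zres n J) h)
    (fun J => - mink x (nu (th J)) - h (zres n J)).
Proof.
  intros J; destruct (zres_theta_succ J) as [-> ->]; destruct (zres_theta_pred J) as [-> ->].
  set (r := zres n J); set (A := phi (prv n r)); set (B := phi r).
  assert (sA : 0 < sinh A) by (apply sinh_pos, phi_pos, prv_lt, zres_lt).
  assert (sB : 0 < sinh B) by (apply sinh_pos, phi_pos, zres_lt).
  pose proof (mink_nu_three x (th J) A B) as M.
  unfold ell; fold A B; rewrite sinh_add in *.
  replace (_ * sinh A * sinh B) with
    ((h r * cosh A - h (prv n r)) * sinh B + (h r * cosh B - h (nxt n r)) * sinh A)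
    by (field; lra).
  lra.
Qed.

Lemma tpolygon_of_two_tight h x a : (forall k, (k < n)%nat -> 0 < ell n phi k h) ->
  mink x (nu (th a)) = - h (zres n a) ->
  mink x (nu (th (a + 1)%Z)) = - h (zres n (a + 1)%Z) ->
  tpolygon n t phi (nu u) h x.
Proof.
  intros Hl Ha Ha1; apply tpolygon_iff; intros J.
  assert (Hphi : forall J, 0 < phi (zres n J)) by (intros; apply phi_pos, zres_lt).
  assert (Hell : forall J, 0 < ell n phi (zres n J) h) by (intros; apply Hl, zres_lt).
  pose proof (sinh_convex_nonneg _ _ _ a Hphi Hell (slack_sinh_convex h x)) as C.
  simpl in C; rewrite Ha, Ha1 in C; specialize (C ltac:(lra) ltac:(lra) J); lra.
Qed.

Section Edge.
Variables (h : nat -> R) (j : nat).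
Hypothesis j_lt : (j < n)%nat.

Let aj := rsum j phi + u.
Let A := phi (prv n j).
Let B := phi j.

Lemma sinh_neighbours_pos : 0 < sinh A /\ 0 < sinh B.
Proof. split; apply sinh_pos, phi_pos; auto; apply prv_lt; auto. Qed.

Lemma tang_edge_bounds x : tpolygon n t phi (nu u) h x -> mink x (nu aj) = - h j ->
  edge_start n phi h j <= tang x aj <= edge_end n phi h j.
Proof.
  intros Hx Hm; rewrite tpolygon_iff in Hx.
  destruct (zres_theta_of_nat j j_lt) as [Ej Tj]; destruct sinh_neighbours_pos.
  pose proof (Hx (Z.of_nat j + 1)%Z) as Hs; pose proof (Hx (Z.of_nat j - 1)%Z) as Hp.
  destruct (zres_theta_succ (Z.of_nat j)) as [E1 E2];
    destruct (zres_theta_pred (Z.of_nat j)) as [E3 E4].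
  rewrite E1, E2, Ej, Tj in Hs; rewrite E3, E4, Ej, Tj in Hp; fold aj A B in Hs, Hp.
  rewrite mink_nu_add, Hm in Hs; rewrite mink_nu_sub, Hm in Hp.
  unfold edge_start, edge_end; fold A B; split;
    [apply div_le_of_le_mul|apply le_div_of_mul_le]; auto; lra.
Qed.

Hypothesis ell_pos : forall k, (k < n)%nat -> 0 < ell n phi k h.

Lemma edge_end_in_tpolygon : tpolygon n t phi (nu u) h (frame aj (- h j) (edge_end n phi h j)).
Proof.
  destruct (zres_theta_of_nat j j_lt) as [Ej Tj]; destruct sinh_neighbours_pos.
  apply (tpolygon_of_two_tight h _ (Z.of_nat j) ell_pos).
  - rewrite Ej, Tj; apply mink_frame.
  - destruct (zres_theta_succ (Z.of_nat j)) as [-> ->]; rewrite Ej, Tj; fold aj B.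
    rewrite mink_nu_add, mink_frame, tang_frame; unfold edge_end; fold B; field; lra.
Qed.

Lemma edge_start_in_tpolygon : tpolygon n t phi (nu u) h (frame aj (- h j) (edge_start n phi h j)).
Proof.
  destruct (zres_theta_of_nat j j_lt) as [Ej Tj]; destruct sinh_neighbours_pos.
  apply (tpolygon_of_two_tight h _ (Z.of_nat j - 1) ell_pos); rewrite ?Z.sub_add.
  - destruct (zres_theta_pred (Z.of_nat j)) as [-> ->]; rewrite Ej, Tj; fold aj A.
    rewrite mink_nu_sub, mink_frame, tang_frame; unfold edge_start; fold A; field; lra.
  - rewrite Ej, Tj; apply mink_frame.
Qed.
End Edge.

Lemma ell_pos_of_genuine_edge h j : (j < n)%nat ->
  genuine_edge (tpolygon n t phi (nu u) h) (fnormal phi (nu u) j) (h j) -> 0 < ell n phi j h.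
Proof.
  intros Hj [x [y [Hxy [Hx [Hy [Lx Ly]]]]]]; rewrite fnormal_nu in Lx, Ly.
  pose proof (tang_edge_bounds h j Hj x Hx Lx); pose proof (tang_edge_bounds h j Hj y Hy Ly).
  set (a := rsum j phi + u) in *.
  assert (Ht : tang x a <> tang y a).
  { intros E; apply Hxy.
    rewrite <- (frame_mink_tang x a), <- (frame_mink_tang y a), Lx, Ly, E; auto. }
  rewrite ell_edge_length; destruct (Rtotal_order (tang x a) (tang y a)) as [|[|]]; lra.
Qed.

Lemma genuine_edge_of_ell_pos h j : (j < n)%nat -> (forall k, (k < n)%nat -> 0 < ell n phi k h) ->
  genuine_edge (tpolygon n t phi (nu u) h) (fnormal phi (nu u) j) (h j).
Proof.
  intros Hj Hl; rewrite fnormal_nu.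
  exists (frame (rsum j phi + u) (- h j) (edge_end n phi h j)),
         (frame (rsum j phi + u) (- h j) (edge_start n phi h j)).
  repeat split; try apply mink_frame.
  - intros E; apply (f_equal (fun x => tang x (rsum j phi + u))) in E.
    rewrite !tang_frame in E; pose proof (Hl j Hj); rewrite ell_edge_length in *; lra.
  - now apply edge_end_in_tpolygon.
  - now apply edge_start_in_tpolygon.
Qed.

Lemma fnormal_nu_injective i j : (i < n)%nat -> (j < n)%nat -> i <> j ->
  fnormal phi (nu u) i <> fnormal phi (nu u) j.
Proof.
  intros Hi Hj Hij E; rewrite !fnormal_nu in E; apply nu_inj in E.
  destruct (proj1 (Nat.lt_gt_cases i j) Hij) as [L|L];
    [pose proof (rsum_lt n phi i j phi_pos ltac:(lia))
    |pose proof (rsum_lt n phi j i phi_pos ltac:(lia))]; lra.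
Qed.

Lemma support_cone_iff h :
  support_cone n t phi (nu u) h <-> forall k, (k < n)%nat -> 0 < ell n phi k h.
Proof.
  split.
  - intros [_ [_ G]] k Hk; exact (ell_pos_of_genuine_edge h k Hk (G k Hk)).
  - intros Hl; repeat split.
    + apply fnormal_nu_injective.
    + now apply (pos_of_ell_pos n phi).
    + intros; now apply genuine_edge_of_ell_pos.
Qed.
End Polygon.

(* The coarea form is [coarea h x = 1/2 * sum_k h_k * ell_k x], so [facet_normal k]
   represents [ell_k]. *)
Definition facet_normal (k : nat) : nat -> R := fun i => if Nat.eqb i k then 2 else 0.

Section Facets.
Variables (n : nat) (phi : nat -> R).
Hypothesis n_ge_3 : (3 <= n)%nat.
Hypothesis phi_pos : forall i, (i < n)%nat -> 0 < phi i.

Lemma coarea_facet_normal k x : (k < n)%nat -> coarea n phi (facet_normal k) x = ell n phi k x.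
Proof.
  intros Hk; unfold coarea; rewrite (rsum_single n _ k Hk).
  - unfold facet_normal, ell; rewrite Nat.eqb_refl; lra.
  - intros i Hi Hik; unfold facet_normal; destruct (Nat.eqb_spec i k); [lia|ring].
Qed.

Section AtIndex.
Variable k : nat.
Hypothesis k_lt : (k < n)%nat.

Lemma ell_facet_normal_self : ell n phi k (facet_normal k) =
  2 * (cosh (phi (prv n k)) / sinh (phi (prv n k)) + cosh (phi k) / sinh (phi k)).
Proof.
  unfold ell, facet_normal; rewrite Nat.eqb_refl.
  destruct (Nat.eqb_spec (prv n k) k) as [E|_]; [now apply prv_neq in E|].
  destruct (Nat.eqb_spec (nxt n k) k) as [E|_]; [now apply nxt_neq in E|].
  unfold Rdiv; ring.
Qed.

Lemma ell_facet_normal_nxt : ell n phi k (facet_normal (nxt n k)) = - 2 / sinh (phi k).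
Proof.
  unfold ell, facet_normal; rewrite Nat.eqb_refl.
  destruct (Nat.eqb_spec k (nxt n k)) as [E|_]; [symmetry in E; now apply nxt_neq in E|].
  destruct (Nat.eqb_spec (prv n k) (nxt n k)) as [E|_];
    [symmetry in E; now apply nxt_neq_prv in E|].
  unfold Rdiv; ring.
Qed.

Lemma ell_facet_normal_prv : ell n phi k (facet_normal (prv n k)) = - 2 / sinh (phi (prv n k)).
Proof.
  unfold ell, facet_normal; rewrite Nat.eqb_refl.
  destruct (Nat.eqb_spec k (prv n k)) as [E|_]; [symmetry in E; now apply prv_neq in E|].
  destruct (Nat.eqb_spec (nxt n k) (prv n k)) as [E|_]; [now apply nxt_neq_prv in E|].
  unfold Rdiv; ring.
Qed.

Lemma ell_facet_normal_far j : j <> k -> j <> nxt n k -> j <> prv n k ->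
  ell n phi k (facet_normal j) = 0.
Proof.
  intros; unfold ell, facet_normal.
  destruct (Nat.eqb_spec k j), (Nat.eqb_spec (prv n k) j), (Nat.eqb_spec (nxt n k) j);
    try congruence; unfold Rdiv; ring.
Qed.
End AtIndex.

(* This is the symmetry of the coarea form. *)
Lemma rsum_ell_facet_normal c j : (j < n)%nat ->
  rsum n (fun k => c k * ell n phi k (facet_normal j)) = 2 * ell n phi j c.
Proof.
  intros Hj; pose proof (nxt_lt n j Hj); pose proof (prv_lt n j Hj).
  rewrite (rsum_three n _ j (nxt n j) (prv n j)); auto.
  - pose proof (ell_facet_normal_prv (nxt n j)) as E1.
    pose proof (ell_facet_normal_nxt (prv n j)) as E2.
    rewrite prv_nxt in E1 by auto; rewrite nxt_prv in E2 by auto.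
    rewrite ell_facet_normal_self, E1, E2 by auto; unfold ell, Rdiv; ring.
  - intros E; symmetry in E; now apply nxt_neq in E.
  - intros E; symmetry in E; now apply prv_neq in E.
  - now apply nxt_neq_prv.
  - intros i Hi H1 H2 H3; rewrite ell_facet_normal_far; auto; [ring| |];
      intros ->; [apply H3; now rewrite prv_nxt|apply H2; now rewrite nxt_prv].
Qed.

Lemma ell_lin_indep : lin_indep_forms n (ell n phi).
Proof.
  intros c Hc; apply (eq0_of_ell_eq0 n phi); auto; intros j Hj.
  pose proof (Hc (facet_normal j)); rewrite rsum_ell_facet_normal in *; auto; lra.
Qed.

Lemma dihedral_cos_facet_normal k : (k < n)%nat ->
  dihedral_cos (coarea n phi) (facet_normal k) (facet_normal (nxt n k)) =
  sqrt (sinh (phi (prv n k)) * sinh (phi (nxt n k)) /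
        (sinh (phi (prv n k) + phi k) * sinh (phi k + phi (nxt n k)))).
Proof.
  intros Hk; pose proof (nxt_lt n k Hk); pose proof (prv_lt n k Hk).
  unfold dihedral_cos; rewrite !coarea_facet_normal by auto.
  rewrite ell_facet_normal_nxt, !ell_facet_normal_self, prv_nxt by auto.
  set (A := phi (prv n k)); set (B := phi k); set (C := phi (nxt n k)).
  assert (A_pos : 0 < A) by (apply phi_pos; auto).
  assert (B_pos : 0 < B) by (apply phi_pos; auto).
  assert (C_pos : 0 < C) by (apply phi_pos; auto).
  pose proof (sinh_pos A A_pos); pose proof (sinh_pos B B_pos); pose proof (sinh_pos C C_pos).
  assert (0 < sinh (A + B)) by (apply sinh_pos; lra).
  assert (0 < sinh (B + C)) by (apply sinh_pos; lra).
  rewrite !coth_add by lra.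
  replace (2 * (sinh (A + B) / (sinh A * sinh B)) * (2 * (sinh (B + C) / (sinh B * sinh C))))
    with (2 / sinh B * (2 / sinh B) / (sinh A * sinh C / (sinh (A + B) * sinh (B + C))))
    by (field; repeat split; lra).
  replace (- (-2 / sinh B)) with (2 / sinh B) by (field; lra).
  apply div_sqrt_div_sq; [apply Rdiv_lt_0_compat; lra|].
  now apply sinh_ratio_in_unit.
Qed.
End Facets.

Lemma sphere_part_simplex n t phi u : (3 <= n)%nat -> (forall i, (i < n)%nat -> 0 < phi i) ->
  rsum n phi = t ->
  spherical_simplex_facets n (coarea n phi) (sphere_part n t phi (nu u)) (ell n phi) (fun _ => 1).
Proof.
  intros Hn Hphi Ht; split; [|split].
  - now apply ell_lin_indep.
  - now left.
  - intros h; unfold sphere_part; rewrite support_cone_iff by auto.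
    split; intros [H1 H2]; split; auto; intros k Hk;
      [specialize (H1 k Hk)|specialize (H2 k Hk)]; lra.
Qed.

Theorem mainTheorem5 (n : nat) (t : R) (phi : nat -> R) (eta : R * R) :
  0 < t -> (3 <= n)%nat ->
  (forall i, (i < n)%nat -> 0 < phi i) ->
  rsum n phi = t ->
  in_H eta ->
  exists eps : nat -> R,
    spherical_simplex_facets n (coarea n phi) (sphere_part n t phi eta)
      (ell n phi) eps /\
    exists N : nat -> nat -> R,
      (forall k, (k < n)%nat -> inward_normal (coarea n phi) (ell n phi k) (eps k) (N k)) /\
      (forall k, (k < n)%nat ->
         exists alpha : R, 0 < alpha < PI / 2 /\
           cos alpha = dihedral_cos (coarea n phi) (N k) (N (nxt n k)) /\
           cos alpha = sqrt (sinh (phi (prv n k)) * sinh (phi (nxt n k)) /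
                  (sinh (phi (prv n k) + phi k) * sinh (phi k + phi (nxt n k))))) /\
      (forall k j, (k < n)%nat -> (j < n)%nat ->
         j <> k -> j <> nxt n k -> j <> prv n k ->
         coarea n phi (N k) (N j) = 0).
Proof.
  intros _ Hn Hphi Ht Heta; destruct (in_H_nu eta Heta) as [u ->].
  exists (fun _ => 1); split; [now apply sphere_part_simplex|].
  exists facet_normal; split; [|split].
  - intros k Hk x; rewrite coarea_facet_normal by auto; ring.
  - intros k Hk; rewrite dihedral_cos_facet_normal by auto.
    pose proof (prv_lt n k Hk) as Hp; pose proof (nxt_lt n k Hk) as Hx.
    destruct (exists_acute_angle _ (sqrt_in_unit _
      (sinh_ratio_in_unit _ _ _ (Hphi _ Hp) (Hphi _ Hk) (Hphi _ Hx)))) as [alpha [Ha Hc]].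
    now exists alpha.
  - intros k j Hk Hj Hjk Hjn Hjp; rewrite coarea_facet_normal by auto.
    now apply ell_facet_normal_far.
Qed.
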